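(* Let $n\ge 2$ be an integer, $C\ge 4$ a constant, $Z$ a finite set, and $T_1,T_2$ rooted $Z$-trees with $\mathrm{Seq}(T_1)=\mathrm{Seq}(T_2)$. Let $Q_1,\dots,Q_k$ and $R_1,\dots,R_m$ be as defined in the context. Suppose $|Q_j|\le 2|Z|/C$ and $|R_l|\le 2|Z|/C$ for all $j,l$, and that at least one of $Q_1,\dots,Q_k,R_1,\dots,R_m$ has size at least $|Z|/\log n$. Then there exists a good pair $(x,Y)$ (with respect to $n$, $T_1$, $T_2$).
   Context: A rooted $Z$-tree is a binary rooted tree with a root of degree two, all other internal nodes of degree three, leaves bijectively labeled by $Z$, and each internal node having a designated left child and right child. $T_v$ is the subtree rooted at node $v$; $\mathrm{Le}(\cdot)$ is the leaf set; the size of a tree is its number of leaves. $x\preceq y$ means $x$ is a descendant of $y$ ($x\prec y$ if also $x\neq y$); $\mathrm{lca}_T(W)$ is the lowest node having all elements of $W$ as descendants. $\mathrm{Seq}(T)$ is the left-to-right leaf ordering given by pre-order traversal (left child before right child). Let $P_1=(u_1,\dots,u_k)$ be the path in $T_1$ from its left-most leaf $u_1$ to its root $u_k$; $Q_1:=$ the one-leaf tree $u_1$ and for $2\le j\le k$, $Q_j:=(T_1)_c$ with $c$ the child of $u_j$ other than $u_{j-1}$. Let $P_2=(w_1,\dots,w_m)$ be the path in $T_2$ from its root $w_1$ to its right-most leaf $w_m$; $R_m:=$ the one-leaf tree $w_m$ and for $1\le l<m$, $R_l:=(T_2)_c$ with $c$ the child of $w_l$ other than $w_{l+1}$. A good pair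 (with respect to $n$, $T_1$, $T_2$) is a pair $(x,Y)$ with $x\in Z$, $\emptyset\ne Y\subset Z$, such that $\mathrm{lca}_{T_1}(Y)\prec\mathrm{lca}_{T_1}(Y\cup\{x\})$, $\mathrm{lca}_{T_2}(Y)\prec\mathrm{lca}_{T_2}(Y\cup\{x\})$, and $|Y|\ge |Z|/(2\log n)$. $\log=\log_2$. *)

From mathcomp Require Import all_boot.
From Stdlib Require Import Reals.

Set Implicit Arguments.
Unset Strict Implicit.
Unset Printing Implicit Defensive.

Inductive tree (Z : Type) : Type :=
| Leaf of Z
| Node of tree Z & tree Z.

Arguments Leaf {Z}.
Arguments Node {Z}.

Section Trees.
Variable Z : finType.

Fixpoint leaves (T : tree Z) : seq Z :=
  match T with
  | Leaf z => [:: z]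
  | Node l r => leaves l ++ leaves r
  end.

Definition Le (T : tree Z) : {set Z} := [set z | z \in leaves T].

Definition tree_size (T : tree Z) : nat := size (leaves T).

(* rooted Z-tree: root has degree two (root is not a leaf), internal nodes
   binary, leaves bijectively labeled by Z. *)
Definition is_ztree (T : tree Z) : bool :=
  [&& (if T is Node _ _ then true else false),
      uniq (leaves T) & perm_eq (leaves T) (enum Z)].

(* Nodes are addressed by their path from the root
   (false = go to left child, true = go to right child). *)
Definition node := seq bool.

(* x ⪯ y : x is a descendant of y, i.e. the path of y is a prefix of that of x *)
Definition desc (x y : node) : bool := prefix y x.
Definition sdesc (x y : node) : bool := desc x y && (x != y).

Fixpoint lca (T : tree Z) (W : {set Z}) : node :=
  match T with
  | Leaf _ => [::]
  | Node l r =>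
      if W \subset Le l then false :: lca l W
      else if W \subset Le r then true :: lca r W
      else [::]
  end.

(* Q_1,...,Q_k: along the path from the left-most leaf to the root, the
   left-most leaf itself and, for each internal node u_j, the child other than
   u_{j-1} (i.e. its right child).  Listed here from the root downwards. *)
Fixpoint Qs (T : tree Z) : seq (tree Z) :=
  match T with
  | Leaf z => [:: Leaf z]
  | Node l r => r :: Qs l
  end.

(* R_1,...,R_m: along the path from the root to the right-most leaf, for each
   internal node w_l the child other than w_{l+1} (its left child), and the
   right-most leaf itself. *)
Fixpoint Rs (T : tree Z) : seq (tree Z) :=
  match T with
  | Leaf z => [:: Leaf z]
  | Node l r => l :: Rs r
  end.

End Trees.

Local Open Scope R_scope.

Definition log2 (x : R) : R := ln x / ln 2.

Definition good_pair (Z : finType) (n : nat) (T1 T2 : tree Z)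
    (x : Z) (Y : {set Z}) : Prop :=
  Y != set0 /\
  sdesc (lca T1 Y) (lca T1 (x |: Y)) /\
  sdesc (lca T2 Y) (lca T2 (x |: Y)) /\
  INR #|Y| >= INR #|Z| / (2 * log2 (INR n)).

From mathcomp Require Import all_boot zify.
From Stdlib Require Import Reals Lra.

Set Implicit Arguments.
Unset Strict Implicit.
Unset Printing Implicit Defensive.

(* A subtree S of a tree T whose leaf set misses a leaf x has the
   property that, for every nonempty Y inside Le(S), adding x to Y strictly
   raises lca_T(Y): lca_T(Y) lies in S while lca_T(Y + x) lies above S.

   Let S be the large tree among the Q_j, R_l; say S = Q_j is a subtree of T1
   (the case of an R_l in T2 is the mirror image).  The root of T2 has two
   children a, b, and Le(S) is split by Le(a), Le(b).  Take Y the larger half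
   of that split (so |Y| >= |S|/2) and x a leaf outside both S and the child
   containing Y; x is found unless the other child c lies entirely inside S.
   In that case Y := Le(c) works, with x any leaf outside S: if c is the left
   child a, S is a single leaf (a holds the left-most leaf, which no other
   Q_j contains), and if c is the right child b, |b| = |Z| - |a| >= |Z|/2
   >= |S| because a = R_1 is small.  Applying the observation above in T1 and in T2 gives the
   good pair; the size bound |Y| >= |S|/2 >= |Z|/(2 log n) is pure arithmetic. *)

Section Subtrees.
Variable Z : finType.
Implicit Types (T S a b c : tree Z) (Y : {set Z}).

Definition spanning T : Prop := forall z : Z, z \in Le T.

Lemma mem_Le T z : (z \in Le T) = (z \in leaves T).
Proof. by rewrite inE. Qed.

Lemma mem_Le_Node a b z : (z \in Le (Node a b)) = (z \in Le a) || (z \in Le b).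
Proof. by rewrite !mem_Le /= mem_cat. Qed.

Lemma leaves_neq_nil T : leaves T != [::].
Proof.
by elim: T => [//|a IHa b _] /=; rewrite -size_eq0 size_cat addn_eq0 size_eq0 (negbTE IHa).
Qed.

Lemma Le_neq0 T : Le T != set0.
Proof.
case E: (leaves T) (leaves_neq_nil T) => [//|z s] _.
by apply/set0Pn; exists z; rewrite mem_Le E mem_head.
Qed.

Lemma first_leaf_in T d : head d (leaves T) \in Le T.
Proof. by rewrite mem_Le; case: (leaves T) (leaves_neq_nil T) => //= z s _; rewrite mem_head. Qed.

Lemma last_leaf_in T d : last d (leaves T) \in Le T.
Proof. by rewrite mem_Le; case: (leaves T) (leaves_neq_nil T) => //= z s _; rewrite mem_last. Qed.

Lemma first_leaf_Node a b d : head d (leaves (Node a b)) = head d (leaves a).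
Proof. by rewrite /=; case: (leaves a) (leaves_neq_nil a). Qed.

Lemma last_leaf_Node a b d : last d (leaves (Node a b)) = last d (leaves b).
Proof. by rewrite /= last_cat; case: (leaves b) (leaves_neq_nil b). Qed.

Lemma Le_children_disjoint a b z :
  uniq (leaves (Node a b)) -> z \in Le a -> z \in Le b -> False.
Proof.
rewrite /= cat_uniq => /and3P [_ Hdisj _]; rewrite !mem_Le => za zb.
by move/hasP: Hdisj; apply; exists z.
Qed.

Lemma uniq_children a b :
  uniq (leaves (Node a b)) -> uniq (leaves a) /\ uniq (leaves b).
Proof. by rewrite /= cat_uniq => /and3P [ua _ ub]. Qed.

Lemma card_Le T : uniq (leaves T) -> #|Le T| = tree_size T.
Proof. by move=> uT; rewrite /Le cardsE; apply/card_uniqP. Qed.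

Lemma sdesc_cons (s : bool) (u v : node) : sdesc (s :: u) (s :: v) = sdesc u v.
Proof. by rewrite /sdesc /desc prefix_cons eqxx /= eqseq_cons eqxx. Qed.

Fixpoint subtree S T : Prop :=
  S = T \/ (if T is Node a b then subtree S a \/ subtree S b else False).

Lemma subtree_refl T : subtree T T.
Proof. by case: T => *; left. Qed.

Lemma subtree_Le S T : subtree S T -> Le S \subset Le T.
Proof.
elim: T => [w|a IHa b IHb] [->|HS] //; try exact: subxx.
apply/subsetP => z; case: HS => [/IHa|/IHb] /subsetP Hsub /Hsub Hz;
  by rewrite mem_Le_Node Hz ?orbT.
Qed.

Lemma subtree_uniq S T : subtree S T -> uniq (leaves T) -> uniq (leaves S).
Proof.
elim: T => [w|a IHa b IHb] [->|HS] // /uniq_children [ua ub].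
by case: HS => [/IHa|/IHb]; apply.
Qed.

Lemma Qs_subtree T S : List.In S (Qs T) -> subtree S T.
Proof.
elim: T => [w|a IHa b _] /=; first by case=> [<-|[]]; left.
by case=> [<-|/IHa HS]; right; [right; apply: subtree_refl | left].
Qed.

Lemma Rs_subtree T S : List.In S (Rs T) -> subtree S T.
Proof.
elim: T => [w|a _ b IHb] /=; first by case=> [<-|[]]; left.
by case=> [<-|/IHb HS]; right; [left; apply: subtree_refl | right].
Qed.

Lemma Qs_first_leaf T S d : uniq (leaves T) -> List.In S (Qs T) ->
  tree_size S = 1 \/ head d (leaves T) \notin Le S.
Proof.
elim: T => [w|a IHa b _] uT /=; first by case=> [<-|[]]; left.
rewrite -/(leaves (Node a b)) first_leaf_Node; case=> [<-|HS].
  by right; apply/negP => /(Le_children_disjoint uT (first_leaf_in a d)).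
by apply: IHa => //; case: (uniq_children uT).
Qed.

Lemma Rs_last_leaf T S d : uniq (leaves T) -> List.In S (Rs T) ->
  tree_size S = 1 \/ last d (leaves T) \notin Le S.
Proof.
elim: T => [w|a _ b IHb] uT /=; first by case=> [<-|[]]; left.
rewrite -/(leaves (Node a b)) last_leaf_Node; case=> [<-|HS].
  by right; apply/negP => /Le_children_disjoint /(_ (last_leaf_in b d)); apply.
by apply: IHb => //; case: (uniq_children uT).
Qed.

(* Key observation: if Y is a nonempty set of leaves of a subtree S of T and
   x is a leaf of T outside S, then lca_T(Y) is a strict descendant of
   lca_T(Y + x), the former lying inside S and the latter above it. *)
Lemma lca_outside_subtree T S Y x : uniq (leaves T) -> subtree S T ->
  Y \subset Le S -> Y != set0 -> x \in Le T -> x \notin Le S ->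
  sdesc (lca T Y) (lca T (x |: Y)).
Proof.
elim: T S => [w|a IHa b IHb] S uT HS YS Yn xT xS.
  by case: HS xS => [->|[]]; rewrite xT.
have [y yY] := set0Pn _ Yn.
have [ua ub] := uniq_children uT.
case: HS xS => [->|[Sa|Sb]] xS; first by rewrite xT in xS.
- have Ya : Y \subset Le a := subset_trans YS (subtree_Le Sa).
  have Yb : ~~ (Y \subset Le b).
    by apply/negP => /subsetP /(_ y yY); apply: Le_children_disjoint uT (subsetP Ya y yY).
  rewrite /= Ya !subUset !sub1set.
  case xa: (x \in Le a); first by rewrite Ya sdesc_cons (IHa S).
  by rewrite (negbTE Yb) andbF.
- have Yb : Y \subset Le b := subset_trans YS (subtree_Le Sb).
  have Ya : ~~ (Y \subset Le a).
    by apply/negP => /subsetP /(_ y yY) /(Le_children_disjoint uT); apply; apply: (subsetP Yb).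
  rewrite /= (negbTE Ya) Yb !subUset !sub1set (negbTE Ya) andbF.
  case xb: (x \in Le b) => //.
  by rewrite Yb sdesc_cons (IHb S).
Qed.

Lemma pair_in_two_trees T T' S c Y x :
  uniq (leaves T) -> uniq (leaves T') -> spanning T -> spanning T' ->
  subtree S T -> subtree c T' -> Y \subset Le S -> Y \subset Le c -> Y != set0 ->
  x \notin Le S -> x \notin Le c ->
  sdesc (lca T Y) (lca T (x |: Y)) /\ sdesc (lca T' Y) (lca T' (x |: Y)).
Proof.
move=> uT uT' spT spT' ST cT' YS Yc Yn xS xc; split.
  exact: lca_outside_subtree uT ST YS Yn (spT x) xS.
exact: lca_outside_subtree uT' cT' Yc Yn (spT' x) xc.
Qed.

Lemma pair_from_half T T' S c c' z :
  uniq (leaves T) -> uniq (leaves T') -> spanning T -> spanning T' ->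
  subtree S T -> subtree c T' -> subtree c' T' ->
  (forall w, w \in Le c -> w \in Le c' -> False) -> z \notin Le S ->
  #|Le S| <= 2 * #|Le S :&: Le c| ->
  (Le c' \subset Le S -> #|Le S| <= 2 * #|Le c'|) ->
  exists x Y, [/\ Y != set0, #|Le S| <= 2 * #|Y|,
    sdesc (lca T Y) (lca T (x |: Y)) & sdesc (lca T' Y) (lca T' (x |: Y))].
Proof.
move=> uT uT' spT spT' ST cT' c'T' disj zS half sibling.
case: (boolP (Le c' \subset Le S)) => [c'S | /subsetPn [x xc' xS]].
  have zc' : z \notin Le c' by apply: contra zS; apply: (subsetP c'S).
  have [] := pair_in_two_trees uT uT' spT spT' ST c'T' c'S (subxx _) (Le_neq0 c') zS zc'.
  by exists z, (Le c'); split => //; [apply: Le_neq0 | apply: sibling].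
have Spos : 0 < #|Le S| by rewrite card_gt0 Le_neq0.
have Yn : Le S :&: Le c != set0 by rewrite -card_gt0; lia.
have xc : x \notin Le c by apply/negP => /disj /(_ xc').
have [] := pair_in_two_trees uT uT' spT spT' ST cT' (subsetIl _ _) (subsetIr _ _) Yn xS xc.
by exists x, (Le S :&: Le c).
Qed.

(* The splitting argument: Le(S) is split by the children a, b of the root of
   T'; the larger part of the split yields a good pair unless the other child
   lies inside S, in which case that child serves as Y. *)
Lemma pair_from_split T a b S z :
  uniq (leaves T) -> uniq (leaves (Node a b)) -> spanning T -> spanning (Node a b) ->
  subtree S T -> z \notin Le S ->
  (Le a \subset Le S -> #|Le S| <= 2 * #|Le a|) ->
  (Le b \subset Le S -> #|Le S| <= 2 * #|Le b|) ->
  exists x Y, [/\ Y != set0, #|Le S| <= 2 * #|Y|,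
    sdesc (lca T Y) (lca T (x |: Y)) & sdesc (lca (Node a b) Y) (lca (Node a b) (x |: Y))].
Proof.
move=> uT uT' spT spT' ST zS Ha Hb.
have sa : subtree a (Node a b) by right; left; apply: subtree_refl.
have sb : subtree b (Node a b) by right; right; apply: subtree_refl.
have split_card : #|Le S| <= #|Le S :&: Le a| + #|Le S :&: Le b|.
  rewrite -cardsUI -setIUr; apply: leq_trans (leq_addr _ _); apply: subset_leq_card.
  by apply/subsetP => w wS; rewrite !inE -!mem_Le wS -mem_Le_Node spT'.
have disj := Le_children_disjoint uT'.
case: (leqP #|Le S :&: Le b| #|Le S :&: Le a|) => Hab.
  by apply: (pair_from_half uT uT' spT spT' ST sa sb disj zS) => //; lia.
by apply: (pair_from_half uT uT' spT spT' ST sb sa _ zS) => //; [move=> w /[swap] /disj | lia].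
Qed.

Lemma ztree_facts T :
  is_ztree T -> [/\ uniq (leaves T), spanning T & #|Z| = tree_size T].
Proof.
case/and3P => _ uT permT; split => //; last by rewrite /tree_size (perm_size permT) cardT.
by move=> z; rewrite mem_Le (perm_mem permT) mem_enum.
Qed.

Lemma pair_from_large_subtree T T' c c' S :
  is_ztree T -> is_ztree T' -> T' = Node c c' \/ T' = Node c' c ->
  subtree S T -> 2 * tree_size S <= #|Z| -> 2 * tree_size c <= #|Z| ->
  ~~ (Le c \subset Le S) \/ tree_size S = 1 ->
  exists x Y, [/\ Y != set0, tree_size S <= 2 * #|Y|,
    sdesc (lca T Y) (lca T (x |: Y)) & sdesc (lca T' Y) (lca T' (x |: Y))].
Proof.
move=> zT zT' ET' ST smallS smallc c_excl.
have [uT spT _] := ztree_facts zT; have [uT' spT' sizeT'] := ztree_facts zT'.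
have cardS := card_Le (subtree_uniq ST uT).
have [cardc' sizecc'] :
    #|Le c'| = tree_size c' /\ tree_size c + tree_size c' = #|Z|.
  rewrite sizeT'; case: ET' uT' => -> /uniq_children [u1 u2];
    by rewrite card_Le // /tree_size /= size_cat // addnC.
have Spos : 0 < #|Le S| by rewrite card_gt0 Le_neq0.
have [z _ zS] : exists2 z, z \in [set: Z] & z \notin Le S.
  by apply/subsetPn; apply/negP => /subset_leq_card; rewrite cardsT; lia.
have Hc : Le c \subset Le S -> #|Le S| <= 2 * #|Le c|.
  case: c_excl => [/negbTE -> // | S1 _].
  by rewrite cardS S1; have := Le_neq0 c; rewrite -card_gt0; lia.
have Hc' : Le c' \subset Le S -> #|Le S| <= 2 * #|Le c'| by lia.
rewrite -cardS; case: ET' uT' spT' => -> uT' spT'.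
  exact: (pair_from_split uT uT' spT spT' ST zS Hc Hc').
exact: (pair_from_split uT uT' spT spT' ST zS Hc' Hc).
Qed.

End Subtrees.

Local Open Scope R_scope.

Lemma INR_double (a : nat) : INR (2 * a) = 2 * INR a.
Proof. by rewrite -[(2 * a)%nat]/(Nat.mul 2 a) mult_INR. Qed.

Lemma half_bound (a b : nat) (C : R) : 4 <= C -> INR a <= 2 * INR b / C -> (2 * a <= b)%nat.
Proof.
move=> HC Hab; apply/leP/INR_le; rewrite INR_double.
have aC : INR a * C <= 2 * INR b.
  by move: (Rmult_le_compat_r C _ _ (ltac:(lra) : 0 <= C) Hab); rewrite /Rdiv Rmult_assoc Rinv_l; lra.
by have := pos_INR a; nra.
Qed.

Lemma half_log_bound (n s y N : nat) : (2 <= n)%nat ->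
  INR s >= INR N / log2 (INR n) -> (s <= 2 * y)%nat ->
  INR y >= INR N / (2 * log2 (INR n)).
Proof.
move=> Hn Hs Hsy.
have n2 : 2 <= INR n by move/leP/le_INR: Hn; rewrite /=; lra.
have ln2 : 0 < ln 2 by rewrite -ln_1; apply: ln_increasing; lra.
have lnn : 0 < ln (INR n) by rewrite -ln_1; apply: ln_increasing; lra.
have logn : 0 < log2 (INR n) by apply: Rdiv_lt_0_compat.
have sy : INR s <= 2 * INR y by rewrite -INR_double; apply/le_INR/leP.
have -> : INR N / (2 * log2 (INR n)) = INR N / log2 (INR n) / 2 by field; lra.
lra.
Qed.

Lemma good_pair_of_half (n s : nat) (Z : finType) (T1 T2 : tree Z) (x : Z) (Y : {set Z}) :
  (2 <= n)%nat -> INR s >= INR #|Z| / log2 (INR n) ->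
  Y != set0 -> (s <= 2 * #|Y|)%nat ->
  sdesc (lca T1 Y) (lca T1 (x |: Y)) -> sdesc (lca T2 Y) (lca T2 (x |: Y)) ->
  good_pair n T1 T2 x Y.
Proof. by move=> Hn Hs Yn HsY d1 d2; do !split => //; apply: half_log_bound Hn Hs HsY. Qed.

Theorem lemma3 (n : nat) (C : R) (Z : finType) (T1 T2 : tree Z) :
  (2 <= n)%nat ->
  (4 <= C) ->
  is_ztree T1 -> is_ztree T2 ->
  leaves T1 = leaves T2 ->
  (forall Q, List.In Q (Qs T1) -> (INR (tree_size Q) <= 2 * INR #|Z| / C)) ->
  (forall R', List.In R' (Rs T2) -> (INR (tree_size R') <= 2 * INR #|Z| / C)) ->
  (exists S, List.In S (Qs T1 ++ Rs T2) /\ (INR (tree_size S) >= INR #|Z| / log2 (INR n))) ->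
  exists (x : Z) (Y : {set Z}), good_pair n T1 T2 x Y.
Proof.
move=> Hn HC zT1 zT2 Eseq HQ HR [S [HS Hbig]].
case: T1 zT1 Eseq HQ HS => [w /and3P [] // | l1 r1] zT1 Eseq HQ HS.
case: T2 zT2 Eseq HR HS => [w /and3P [] // | l2 r2] zT2 Eseq HR HS.
have [d _] := set0Pn _ (Le_neq0 S).
have [[u1 _ _] [u2 _ _]] := (ztree_facts zT1, ztree_facts zT2).
have [{}HS|{}HS] : List.In S (Qs (Node l1 r1)) \/ List.In S (Rs (Node l2 r2))
  by exact: List.in_app_or.
- (* S = Q_j: the left child l2 of T2 holds the left-most leaf. *)
  have [|x [Y [Yn HY d1 d2]]] := pair_from_large_subtree zT1 zT2 (or_introl erefl)
    (Qs_subtree HS) (half_bound HC (HQ S HS)) (half_bound HC (HR l2 (or_introl erefl))).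
    case: (Qs_first_leaf d u1 HS) => [|first_out]; [by right | left].
    apply/subsetPn; exists (head d (leaves l2)); first exact: first_leaf_in.
    by rewrite -(first_leaf_Node _ r2) -Eseq.
  by exists x, Y; apply: good_pair_of_half Hn Hbig Yn HY d1 d2.
- (* S = R_l: the right child r1 of T1 holds the right-most leaf. *)
  have [|x [Y [Yn HY d2 d1]]] := pair_from_large_subtree zT2 zT1 (or_intror erefl)
    (Rs_subtree HS) (half_bound HC (HR S HS)) (half_bound HC (HQ r1 (or_introl erefl))).
    case: (Rs_last_leaf d u2 HS) => [|last_out]; [by right | left].
    apply/subsetPn; exists (last d (leaves r1)); first exact: last_leaf_in.
    by rewrite -(last_leaf_Node l1) Eseq.
  by exists x, Y; apply: good_pair_of_half Hn Hbig Yn HY d1 d2.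
Qed.
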